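(* Let $G$ be a finite simple graph and let $\{a,b\}$ be an edge of $G$. Then \[I(G)^{[2]}:ab = I(G-\{a,b\})+\big(cd \;:\; c\in N_G(a),\ d\in N_G(b),\ c\neq d,\ c,d\notin\{a,b\}\big).\] In particular, $I(G)^{[2]}:ab$ is the edge ideal of a graph.
   Context: $G$ is a finite simple graph on vertex set $\{x_1,\ldots,x_n\}$, identified with the variables of $S=K[x_1,\ldots,x_n]$ ($K$ a field); edges are identified with the corresponding degree-2 monomials. $I(G)$ is the edge ideal, generated by the monomials $x_ix_j$ with $\{x_i,x_j\}\in E(G)$. $I(G)^{[2]}$ is the ideal generated by all products $e_1e_2$ where $e_1,e_2$ are disjoint edges of $G$. $N_G(x)$ is the set of neighbours of $x$ in $G$. For $W\subseteq V(G)$, $G-W$ denotes the induced subgraph of $G$ on $V(G)\setminus W$. *)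

From HB Require Import structures.
From mathcomp Require Import all_boot all_order all_algebra.
Set Implicit Arguments. Unset Strict Implicit. Unset Printing Implicit Defensive.
Import GRing.Theory.
Local Open Scope ring_scope.

(* The polynomial ring K[x_0,...,x_{n-1}], built as iterated univariate
   polynomial rings: mpoly K 0 = K, mpoly K (n+1) = (mpoly K n)[X]. *)
Fixpoint mpoly (K : comNzRingType) (n : nat) : comNzRingType :=
  match n with
  | 0 => K
  | n'.+1 => {poly mpoly K n'}
  end.

Fixpoint mvar (K : comNzRingType) (n : nat) (i : nat) : mpoly K n :=
  match n return mpoly K n with
  | 0 => 0
  | n'.+1 => if i == n' then 'X else (mvar K n' i)%:P
  end.

Definition x (K : comNzRingType) (n : nat) (i : 'I_n) : mpoly K n := mvar K n i.

Definition gen_ideal (R : comNzRingType) (P : R -> Prop) : R -> Prop :=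
  fun f => exists (k : nat) (c g : 'I_k -> R),
      (forall j, P (g j)) /\ f = \sum_(j < k) c j * g j.

Definition ideal_add (R : comNzRingType) (I J : R -> Prop) : R -> Prop :=
  fun f => exists g h, I g /\ J h /\ f = g + h.

Definition ideal_colon (R : comNzRingType) (I : R -> Prop) (h : R) : R -> Prop :=
  fun f => I (f * h).

Definition simple_graph (n : nat) (e : rel 'I_n) : Prop :=
  symmetric e /\ irreflexive e.

Definition edge_ideal (K : comNzRingType) (n : nat) (e : rel 'I_n) : mpoly K n -> Prop :=
  gen_ideal (fun g => exists i j, e i j /\ g = x K i * x K j).

Definition edge_ideal_sq_matching (K : comNzRingType) (n : nat) (e : rel 'I_n)
  : mpoly K n -> Prop :=
  gen_ideal (fun g => exists i j k l, e i j /\ e k l /\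
     [/\ i != k, i != l, j != k & j != l] /\
     g = x K i * x K j * (x K k * x K l)).

(* Induced subgraph G - W on V \ W (as a graph on 'I_n whose vertices in W
   are removed; its edge ideal lives in the same ring S). *)
Definition del_vertices (n : nat) (e : rel 'I_n) (W : pred 'I_n) : rel 'I_n :=
  fun i j => [&& e i j, i \notin W & j \notin W].

Arguments x K {n} i.
Arguments edge_ideal K {n} e _.
Arguments edge_ideal_sq_matching K {n} e _.

(* A polynomial lies in the colon ideal I(G)^[2] : ab exactly when each of its
   monomials does, since I(G)^[2] is a monomial ideal.  If m ab is divisible by
   the product of two disjoint edges, either one of these edges avoids {a,b}
   and divides m, or both edges meet {a,b}; being disjoint they are then of the
   form ca and db with c, d outside {a,b} and distinct, and cd divides m. *)
From HB Require Import structures.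
From mathcomp Require Import all_boot all_order all_algebra.
From mathcomp.algebra_tactics Require Import ring.
Import GRing.Theory.
Set Implicit Arguments. Unset Strict Implicit. Unset Printing Implicit Defensive.
Local Open Scope ring_scope.

Definition is_ideal (R : comNzRingType) (I : R -> Prop) : Prop :=
  [/\ I 0, forall f g, I f -> I g -> I (f + g) & forall c f, I f -> I (c * f)].

Section Ideals.
Variable R : comNzRingType.

Section IdealTheory.
Variable I : R -> Prop.
Hypothesis idI : is_ideal I.

Lemma ideal0 : I 0. Proof. by case: idI. Qed.

Lemma idealD f g : I f -> I g -> I (f + g). Proof. by case: idI => _ + _; apply. Qed.

Lemma idealMl c f : I f -> I (c * f). Proof. by case: idI => _ _; apply. Qed.

Lemma ideal_sum (T : Type) (s : seq T) (Ps : pred T) (F : T -> R) :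
  (forall t, I (F t)) -> I (\sum_(t <- s | Ps t) F t).
Proof. by move=> IF; apply: big_ind => //; [exact: ideal0 | exact: idealD]. Qed.

End IdealTheory.

Lemma gen_ideal_is_ideal (P : R -> Prop) : is_ideal (gen_ideal P).
Proof.
split.
- by exists 0%N, (fun _ => 0), (fun _ => 0); split; [case | rewrite big_ord0].
- move=> _ _ [k1 [c1 [g1 [P1 ->]]]] [k2 [c2 [g2 [P2 ->]]]].
  pose glue (h1 : 'I_k1 -> R) (h2 : 'I_k2 -> R) (j : 'I_(k1 + k2)) :=
    match split j with inl j1 => h1 j1 | inr j2 => h2 j2 end.
  exists (k1 + k2)%N, (glue c1 c2), (glue g1 g2).
  split; first by move=> j; rewrite /glue; case: (split j).
  rewrite big_split_ord /glue; congr (_ + _); apply: eq_bigr => j _.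
  + by rewrite (unsplitK (inl _ j)).
  + by rewrite (unsplitK (inr _ j)).
- move=> c _ [k [c1 [g1 [P1 ->]]]].
  exists k, (fun j => c * c1 j), g1; split => //.
  by rewrite big_distrr; apply: eq_bigr => j _; exact: mulrA.
Qed.

Lemma mem_gen_ideal (P : R -> Prop) g : P g -> gen_ideal P g.
Proof.
by move=> Pg; exists 1%N, (fun _ => 1), (fun _ => g); rewrite big_ord1 mul1r; split.
Qed.

Lemma gen_ideal_min (P I : R -> Prop) :
  is_ideal I -> (forall g, P g -> I g) -> forall f, gen_ideal P f -> I f.
Proof.
move=> idI PI _ [k [c [g [Pg ->]]]].
by apply: ideal_sum => // j; apply: idealMl => //; apply: PI.
Qed.

Lemma ideal_add_is_ideal (I J : R -> Prop) :
  is_ideal I -> is_ideal J -> is_ideal (ideal_add I J).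
Proof.
move=> idI idJ; split.
- by exists 0, 0; rewrite addr0; do !split; apply: ideal0.
- move=> _ _ [g1 [h1 [I1 [J1 ->]]]] [g2 [h2 [I2 [J2 ->]]]].
  exists (g1 + g2), (h1 + h2); rewrite addrACA.
  by do !split; apply: idealD.
- move=> c _ [g [h [Ig [Jh ->]]]].
  exists (c * g), (c * h); rewrite mulrDr.
  by do !split; apply: idealMl.
Qed.

Lemma ideal_addl (I J : R -> Prop) f : is_ideal J -> I f -> ideal_add I J f.
Proof.
by move=> idJ If; exists f, 0; rewrite addr0; do !split => //; apply: ideal0.
Qed.

Lemma ideal_addr (I J : R -> Prop) f : is_ideal I -> J f -> ideal_add I J f.
Proof.
by move=> idI Jf; exists 0, f; rewrite add0r; do !split => //; apply: ideal0.
Qed.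

Lemma ideal_colon_is_ideal (I : R -> Prop) h :
  is_ideal I -> is_ideal (ideal_colon I h).
Proof.
rewrite /ideal_colon => idI; split.
- by rewrite mul0r; apply: ideal0.
- by move=> f g If Ig; rewrite mulrDl; apply: idealD.
- by move=> c f If; rewrite -mulrA; apply: idealMl.
Qed.

End Ideals.

Section Monomials.
Variable K : comNzRingType.

Definition dec_at (al : nat -> nat) (i : nat) : nat -> nat :=
  fun j => if j == i then (al j).-1 else al j.

Definition inc_at (al : nat -> nat) (i : nat) : nat -> nat :=
  fun j => if j == i then (al j).+1 else al j.

(* Exponent vectors are functions [nat -> nat] of which only the values below
   [n] matter. *)
Fixpoint mcoef (n : nat) : (nat -> nat) -> mpoly K n -> K :=
  match n return (nat -> nat) -> mpoly K n -> K with
  | 0 => fun _ f => f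
  | n'.+1 => fun al (f : {poly mpoly K n'}) => mcoef al f`_(al n')
  end.

Fixpoint mmonom (n : nat) (al : nat -> nat) : mpoly K n :=
  match n return mpoly K n with
  | 0 => 1
  | n'.+1 => (mmonom n' al)%:P * 'X^(al n')
  end.

Fixpoint mconst (n : nat) (c : K) : mpoly K n :=
  match n return mpoly K n with
  | 0 => c
  | n'.+1 => (mconst n' c)%:P
  end.

Lemma mconst0 n : mconst n 0 = 0.
Proof. by elim: n => //= n ->. Qed.

Lemma mcoef0 n al : mcoef al (0 : mpoly K n) = 0.
Proof. by elim: n => //= n IH; rewrite coef0 IH. Qed.

Lemma mcoefD n al (f g : mpoly K n) : mcoef al (f + g) = mcoef al f + mcoef al g.
Proof. by elim: n f g => //= n IH f g; rewrite coefD IH. Qed.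

Lemma eq_mcoef n al be (f : mpoly K n) :
  (forall j, (j < n)%N -> al j = be j) -> mcoef al f = mcoef be f.
Proof.
elim: n f => //= n IH f eq_al_be.
by rewrite eq_al_be // (IH _ (fun j lt_jn => eq_al_be j (ltnW lt_jn))).
Qed.

Lemma eq_mmonom n al be :
  (forall j, (j < n)%N -> al j = be j) -> mmonom n al = mmonom n be.
Proof.
elim: n => //= n IH eq_al_be.
by rewrite eq_al_be // (IH (fun j lt_jn => eq_al_be j (ltnW lt_jn))).
Qed.

Lemma mcoef_mulX n al (g : mpoly K n) i : (i < n)%N ->
  mcoef al (g * mvar K n i) = if (0 < al i)%N then mcoef (dec_at al i) g else 0.
Proof.
elim: n g => // n IH g lt_in /=.
have [->|neq_in] := eqVneq i n.
  rewrite coefMX /dec_at eqxx; case: (al n) => [|k] /=; first by rewrite mcoef0.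
  by apply: eq_mcoef => j lt_jn; rewrite (ltn_eqF lt_jn).
have lt_in' : (i < n)%N by rewrite ltn_neqAle neq_in -ltnS.
by rewrite /dec_at eq_sym (negbTE neq_in) coefMC IH.
Qed.

Lemma mcoef_mulX_inc n al (g : mpoly K n) i : (i < n)%N ->
  mcoef (inc_at al i) (g * mvar K n i) = mcoef al g.
Proof.
move=> lt_in; rewrite mcoef_mulX // /inc_at eqxx /=.
by apply: eq_mcoef => j _; rewrite /dec_at /inc_at; case: eqP => // ->.
Qed.

Lemma mcoef_mulX_neq0 n al (g : mpoly K n) i : (i < n)%N ->
  mcoef al (g * mvar K n i) != 0 -> (0 < al i)%N.
Proof. by move=> lt_in; rewrite mcoef_mulX //; case: ifP; rewrite ?eqxx. Qed.

Lemma mmonom_dec n al i : (i < n)%N -> (0 < al i)%N ->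
  mmonom n al = mmonom n (dec_at al i) * mvar K n i.
Proof.
elim: n => // n IH lt_in al_i_gt0 /=.
have [eq_in|neq_in] := eqVneq i n.
  rewrite -eq_in /dec_at eqxx -mulrA -exprSr prednK // eq_in.
  by congr (_%:P * _); apply: eq_mmonom => j lt_jn; rewrite (ltn_eqF lt_jn).
have lt_in' : (i < n)%N by rewrite ltn_neqAle neq_in -ltnS.
by rewrite /dec_at eq_sym (negbTE neq_in) (IH lt_in' al_i_gt0) polyCM mulrAC.
Qed.

Lemma mmonom_mul2 n al u v : (u < n)%N -> (v < n)%N -> u != v ->
  (0 < al u)%N -> (0 < al v)%N ->
  exists m, mmonom n al = m * (mvar K n u * mvar K n v).
Proof.
move=> lt_un lt_vn neq_uv al_u_gt0 al_v_gt0.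
have dec_v_gt0 : (0 < dec_at al u v)%N by rewrite /dec_at eq_sym (negbTE neq_uv).
exists (mmonom n (dec_at (dec_at al u) v)).
rewrite (mmonom_dec lt_un al_u_gt0) (mmonom_dec lt_vn dec_v_gt0).
by rewrite -!mulrA [mvar K n v * _]mulrC.
Qed.

Lemma mpoly_expand n (f : mpoly K n) :
  exists s : seq (nat -> nat), f = \sum_(al <- s) mconst n (mcoef al f) * mmonom n al.
Proof.
elim: n f => [|n IH] f; first by exists [:: fun _ => 0%N]; rewrite big_seq1 /= mulr1.
suff [s def_f] : exists s : seq (nat -> nat), \sum_(k < size f) (f`_k)%:P * 'X^k =
    \sum_(al <- s) mconst n.+1 (mcoef al f) * mmonom n.+1 al.
  exists s; rewrite -def_f -[LHS]coefK poly_def.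
  by apply: eq_bigr => k _; rewrite mul_polyC.
elim: (size f) => [|m [s1 IHm]]; first by exists [::]; rewrite big_ord0 big_nil.
have [s2 def_fm] := IH f`_m.
pose set_n (al : nat -> nat) j := if j == n then m else al j.
have set_nE al j : (j < n)%N -> set_n al j = al j.
  by move=> lt_jn; rewrite /set_n ltn_eqF.
exists (s1 ++ map set_n s2).
rewrite big_ord_recr /= IHm big_cat big_map; congr (_ + _).
rewrite {1}def_fm rmorph_sum big_distrl /=; apply: eq_bigr => al _ /=.
rewrite /set_n eqxx polyCM -mulrA.
by rewrite (eq_mcoef _ (set_nE al)) (eq_mmonom (set_nE al)).
Qed.

Lemma mem_ideal_mmonom n (I : mpoly K n -> Prop) f : is_ideal I ->
  (forall al, mcoef al f != 0 -> I (mmonom n al)) -> I f.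
Proof.
move=> idI I_supp; have [s ->] := mpoly_expand f.
apply: ideal_sum => // al; have [->|nz] := eqVneq (mcoef al f) 0.
  by rewrite mconst0 mul0r; apply: ideal0.
by apply: idealMl => //; apply: I_supp.
Qed.

Lemma gen_ideal_mcoef_neq0 n (P : mpoly K n -> Prop) F al :
  gen_ideal P F -> mcoef al F != 0 -> exists c g, P g /\ mcoef al (c * g) != 0.
Proof.
case=> k [c [g [Pg ->]]]; rewrite (big_morph _ (mcoefD al) (mcoef0 n al)).
case: (pickP (fun j => mcoef al (c j * g j) != 0)) => [j nz _|all0].
  by exists (c j), (g j).
by rewrite big1 ?eqxx // => j _; apply/eqP/negbFE/all0.
Qed.

End Monomials.

Section ColonEdge.
Variables (n : nat) (e : rel 'I_n) (a b : 'I_n).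

Definition colon_edge : rel 'I_n := fun u v =>
  del_vertices e (pred2 a b) u v ||
  [&& u != v, u \notin pred2 a b, v \notin pred2 a b &
      (e u a && e v b) || (e v a && e u b)].

Lemma colon_edge_simple : simple_graph e -> simple_graph colon_edge.
Proof.
move=> [sym irr]; split => [u v|u]; last by rewrite /colon_edge /del_vertices irr eqxx.
rewrite /colon_edge /del_vertices sym [v == u]eq_sym [(e v a && _) || _]orbC.
by case: (u \in pred2 a b); case: (v \in pred2 a b); rewrite ?andbT ?andbF.
Qed.

Lemma colon_edge_notin u v :
  colon_edge u v -> (u \notin pred2 a b) && (v \notin pred2 a b).
Proof. by case/orP => [/and3P[_ -> ->] | /and4P[_ -> -> _]]. Qed.

Lemma colon_edge_of_disjoint_edges (P : pred 'I_n) i j k l :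
  simple_graph e -> e i j -> e k l -> [/\ i != k, i != l, j != k & j != l] ->
  P i -> P j -> P k -> P l -> exists u v, [&& P u, P v & colon_edge u v].
Proof.
move=> [sym irr] eij ekl [ik il jk jl] Pi Pj Pk Pl.
have del_edge u v : e u v -> u \notin pred2 a b -> v \notin pred2 a b ->
    P u -> P v -> exists u v, [&& P u, P v & colon_edge u v].
  move=> euv uW vW Pu Pv; exists u, v.
  by rewrite Pu Pv /colon_edge /del_vertices euv uW vW.
wlog iW : i j eij ik il jk jl Pi Pj / j \in pred2 a b -> i \in pred2 a b.
  move=> gen; have [iW|iW] := boolP (i \in pred2 a b).
    by apply: (gen _ _ eij) => // _.
  by apply: (gen j i) => //; [rewrite sym | rewrite (negbTE iW)].
wlog kW : k l ekl ik il jk jl Pk Pl / l \in pred2 a b -> k \in pred2 a b.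
  move=> gen; have [kW|kW] := boolP (k \in pred2 a b).
    by apply: (gen _ _ ekl) => // _.
  by apply: (gen l k) => //; [rewrite sym | rewrite (negbTE kW)].
have [{}iW|iW'] := boolP (i \in pred2 a b); last first.
  by apply: (del_edge i j) => //; apply: contra iW iW'.
have [{}kW|kW'] := boolP (k \in pred2 a b); last first.
  by apply: (del_edge k l) => //; apply: contra kW kW'.
(* Now i and k are the two distinct vertices a and b, so j and l avoid them. *)
have ji : j != i by apply: contraTneq eij => ->; rewrite irr.
have lk : l != k by apply: contraTneq ekl => ->; rewrite irr.
have li : l != i by rewrite eq_sym.
exists j, l; rewrite Pj Pl /colon_edge; apply/orP; right.
rewrite jl !inE !negb_or !(sym j) !(sym l).
move: iW kW; rewrite !inE => /pred2P[] eq_i /pred2P[] eq_k; subst i k;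
  by rewrite ?eqxx // in ik *; rewrite ji jk li lk eij ekl ?orbT.
Qed.

End ColonEdge.

Section ColonIdeal.
Variables (K : comNzRingType) (n : nat) (e : rel 'I_n) (a b : 'I_n).
Hypotheses (simple_e : simple_graph e) (eab : e a b).

Lemma colon_edge_mul_edge u v : colon_edge e a b u v ->
  edge_ideal_sq_matching K e (x K u * x K v * (x K a * x K b)).
Proof.
case: simple_e => sym irr.
have ab : a != b by apply: contraTneq eab => ->; rewrite irr.
case/orP => [/and3P[euv uW vW] | /and4P[uv uW vW eu_ev]]; apply: mem_gen_ideal;
  move: uW vW; rewrite !inE !negb_or => /andP[ua ub] /andP[va vb].
  by exists u, v, a, b.
case/orP: eu_ev => [/andP[eua evb] | /andP[eva eub]].
  by exists u, a, v, b; rewrite mulrACA -[a == v]eq_sym.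
exists v, a, u, b; rewrite [x K u * _]mulrC mulrACA.
by rewrite -[a == u]eq_sym -[v == u]eq_sym.
Qed.

Lemma colon_edge_ideal_sub_colon f : edge_ideal K (colon_edge e a b) f ->
  ideal_colon (edge_ideal_sq_matching K e) (x K a * x K b) f.
Proof.
apply: gen_ideal_min; first exact/ideal_colon_is_ideal/gen_ideal_is_ideal.
by move=> _ [u [v [uv_edge ->]]]; apply: colon_edge_mul_edge.
Qed.

Lemma colon_sub_colon_edge_ideal f :
  ideal_colon (edge_ideal_sq_matching K e) (x K a * x K b) f ->
  edge_ideal K (colon_edge e a b) f.
Proof.
move=> f_colon; apply: mem_ideal_mmonom (gen_ideal_is_ideal _) _ => al al_f.
pose be := inc_at (inc_at al a) b.
have be_fab : mcoef be (f * (x K a * x K b)) != 0.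
  by rewrite mulrA !mcoef_mulX_inc.
have [c [_ [[i [j [k [l [eij [ekl [dis ->]]]]]]] nz]]] :=
  gen_ideal_mcoef_neq0 f_colon be_fab.
have be_gt0 w : (exists g, c * (x K i * x K j * (x K k * x K l)) = g * x K w) ->
    (0 < be w)%N.
  by case=> g eq_g; move: nz; rewrite eq_g; apply: mcoef_mulX_neq0.
have be_i : (0 < be i)%N.
  by apply: be_gt0; exists (c * (x K j * (x K k * x K l))); ring.
have be_j : (0 < be j)%N.
  by apply: be_gt0; exists (c * (x K i * (x K k * x K l))); ring.
have be_k : (0 < be k)%N by apply: be_gt0; exists (c * (x K i * x K j * x K l)); ring.
have be_l : (0 < be l)%N by apply: be_gt0; exists (c * (x K i * x K j * x K k)); ring.
have [u [v /and3P[be_u be_v uv_edge]]] :=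
  colon_edge_of_disjoint_edges a b (P := fun w => (0 < be w)%N) simple_e eij ekl dis
    be_i be_j be_k be_l.
have be_al w : w \notin pred2 a b -> be w = al w.
  by rewrite !inE negb_or => /andP[wa wb]; rewrite /be /inc_at !ifN.
have /andP[uW vW] := colon_edge_notin uv_edge.
have uv : u != v.
  by apply: contraTneq uv_edge => ->; case: (colon_edge_simple a b simple_e) => _ ->.
have al_u : (0 < al u)%N by rewrite -be_al.
have al_v : (0 < al v)%N by rewrite -be_al.
have [m ->] := mmonom_mul2 K (ltn_ord u) (ltn_ord v) uv al_u al_v.
by apply: idealMl; [exact: gen_ideal_is_ideal | apply: mem_gen_ideal; exists u, v].
Qed.

Lemma ideal_colon_matchingE f :
  ideal_colon (edge_ideal_sq_matching K e) (x K a * x K b) f <->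
  edge_ideal K (colon_edge e a b) f.
Proof.
by split; [apply: colon_sub_colon_edge_ideal | apply: colon_edge_ideal_sub_colon].
Qed.

Lemma colon_edge_idealE f :
  edge_ideal K (colon_edge e a b) f <->
  ideal_add (edge_ideal K (del_vertices e (pred2 a b)))
    (gen_ideal (fun g => exists c d : 'I_n,
       [/\ e c a, e d b, c != d, c \notin pred2 a b & d \notin pred2 a b] /\
       g = x K c * x K d)) f.
Proof.
split.
  apply: gen_ideal_min.
    exact/ideal_add_is_ideal/gen_ideal_is_ideal/gen_ideal_is_ideal.
  move=> _ [u [v [/orP[del_uv | /and4P[uv uW vW eu_ev]] ->]]].
    by apply/ideal_addl/mem_gen_ideal; [exact: gen_ideal_is_ideal | exists u, v].
  apply/ideal_addr/mem_gen_ideal; first exact: gen_ideal_is_ideal.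
  case/orP: eu_ev => [/andP[eua evb] | /andP[eva eub]]; first by exists u, v.
  by exists v, u; split; [split; rewrite // eq_sym | exact: mulrC].
case=> g [h [g_del [h_cd ->]]]; apply: idealD; first exact: gen_ideal_is_ideal.
  apply: gen_ideal_min g_del; first exact: gen_ideal_is_ideal.
  move=> _ [u [v [del_uv ->]]]; apply: mem_gen_ideal; exists u, v.
  by rewrite /colon_edge del_uv.
apply: gen_ideal_min h_cd; first exact: gen_ideal_is_ideal.
move=> _ [c [d [[eca edb cd cW dW] ->]]]; apply: mem_gen_ideal; exists c, d.
by rewrite /colon_edge cd cW dW eca edb orbT.
Qed.

End ColonIdeal.

Theorem lemma2p5 (K : fieldType) (n : nat) (e : rel 'I_n) (a b : 'I_n) :
  simple_graph e -> e a b ->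
  (forall f : mpoly K n,
     ideal_colon (edge_ideal_sq_matching K e) (x K a * x K b) f <->
     ideal_add (edge_ideal K (del_vertices e (pred2 a b)))
       (gen_ideal (fun g => exists c d : 'I_n,
          [/\ e c a, e d b, c != d, c \notin pred2 a b & d \notin pred2 a b] /\
          g = x K c * x K d)) f)
  /\
  (exists e' : rel 'I_n, simple_graph e' /\
     forall f : mpoly K n,
       ideal_colon (edge_ideal_sq_matching K e) (x K a * x K b) f <->
       edge_ideal K e' f).
Proof.
move=> simple_e eab; split.
  move=> f; apply: iff_trans (ideal_colon_matchingE simple_e eab f) _.
  exact: colon_edge_idealE.
exists (colon_edge e a b); split; first exact: colon_edge_simple.
exact: ideal_colon_matchingE.
Qed.
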